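(* Let $M$ be a lcm-monoid. Then there exists a left $\mathscr{M}$-brace $(\mathcal{B},\oplus,\cdot)$ such that the monoid $(\mathcal{B},\cdot)$ is isomorphic to $M$. Furthermore, if $M$ is a Gaussian monoid, then there exist a left $\mathscr{M}$-brace $(\mathcal{B},\oplus,\cdot)$ and a right $\mathscr{M}$-brace $(\mathcal{B},+,\cdot)$ (on the same set $\mathcal{B}$ with the same multiplication $\cdot$) such that $(\mathcal{B},\cdot)$ is isomorphic to $M$.
   Context: For elements $a,g$ of a monoid $M$, $a$ is a left divisor of $g$ if $g=ab$ for some $b\in M$, and a right divisor of $g$ if $g=ba$ for some $b\in M$. A lcm (resp. gcd) with respect to left divisibility is a least common multiple (resp. greatest common divisor) for the preorder ''is a left divisor of''; similarly for right divisibility. An element $a\neq 1$ of $M$ is an atom if $a=bc$ implies $b=1$ or $c=1$; $M$ is atomic if it is generated by its atoms and every element is a finite product of atoms. A monoid $M$ is a lcm-monoid if (i) $1$ is the unique invertible element of $M$, (ii) $M$ is left cancellative, and (iii) every pair of elements of $M$ has a lcm with respect to left divisibility. A monoid $M$ is a Gaussian monoid if (i) $M$ is atomic, (ii) $M$ is cancellative (left and right), and (iii) every pair of elements of $M$ has a lcm and a gcd with respect to both left and right divisibility. A left $\mathscr{M}$-brace is a set $\mathcal{B}$ with two operations $\oplus$ and $\cdot$ such that $(\mathcal{B},\oplus)$ is a commutative monoid, $(\mathcal{B},\cdot)$ is a monoid, and for all $a,b,c\in\mathcal{B}$: $a\cdot(b\oplus c)=a\cdot b\oplus a\cdot c$.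 A right $\mathscr{M}$-brace is defined similarly, with the axiom $(a\oplus b)\cdot c=a\cdot c\oplus b\cdot c$ for all $a,b,c\in\mathcal{B}$ instead. *)

From Stdlib Require Import List.
Import ListNotations.

Section Monoids.
Context {T : Type}.

Definition is_monoid (op : T -> T -> T) (e : T) : Prop :=
  (forall x y z, op x (op y z) = op (op x y) z) /\
  (forall x, op e x = x) /\ (forall x, op x e = x).

Definition is_comm_monoid (op : T -> T -> T) (e : T) : Prop :=
  is_monoid op e /\ (forall x y, op x y = op y x).

Definition ldiv (op : T -> T -> T) (a g : T) : Prop := exists b, g = op a b.
Definition rdiv (op : T -> T -> T) (a g : T) : Prop := exists b, g = op b a.

Definition is_lcm_for (le : T -> T -> Prop) (a b m : T) : Prop :=
  le a m /\ le b m /\ (forall c, le a c -> le b c -> le m c).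
Definition is_gcd_for (le : T -> T -> Prop) (a b d : T) : Prop :=
  le d a /\ le d b /\ (forall c, le c a -> le c b -> le c d).

Definition invertible (op : T -> T -> T) (e x : T) : Prop :=
  exists y, op x y = e /\ op y x = e.

Definition left_cancellative (op : T -> T -> T) : Prop :=
  forall a b c, op a b = op a c -> b = c.
Definition right_cancellative (op : T -> T -> T) : Prop :=
  forall a b c, op b a = op c a -> b = c.

Definition is_atom (op : T -> T -> T) (e a : T) : Prop :=
  a <> e /\ (forall b c, a = op b c -> b = e \/ c = e).

Definition atomic (op : T -> T -> T) (e : T) : Prop :=
  forall x, exists s : list T,
    (forall a, In a s -> is_atom op e a) /\ x = fold_right op e s.

Definition lcm_monoid (op : T -> T -> T) (e : T) : Prop :=
  is_monoid op e /\
  (forall x, invertible op e x -> x = e) /\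
  left_cancellative op /\
  (forall a b, exists m, is_lcm_for (ldiv op) a b m).

Definition gaussian_monoid (op : T -> T -> T) (e : T) : Prop :=
  is_monoid op e /\
  atomic op e /\
  left_cancellative op /\ right_cancellative op /\
  (forall a b, exists m, is_lcm_for (ldiv op) a b m) /\
  (forall a b, exists d, is_gcd_for (ldiv op) a b d) /\
  (forall a b, exists m, is_lcm_for (rdiv op) a b m) /\
  (forall a b, exists d, is_gcd_for (rdiv op) a b d).

Definition left_Mbrace (oplus : T -> T -> T) (zero : T)
  (mul : T -> T -> T) (one : T) : Prop :=
  is_comm_monoid oplus zero /\ is_monoid mul one /\
  (forall a b c, mul a (oplus b c) = oplus (mul a b) (mul a c)).

Definition right_Mbrace (oplus : T -> T -> T) (zero : T)
  (mul : T -> T -> T) (one : T) : Prop :=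
  is_comm_monoid oplus zero /\ is_monoid mul one /\
  (forall a b c, mul (oplus a b) c = oplus (mul a c) (mul b c)).
End Monoids.

Definition monoid_iso {B M : Type} (mul : B -> B -> B) (one : B)
  (op : M -> M -> M) (e : M) (f : B -> M) : Prop :=
  (forall x y, f x = f y -> x = y) /\ (forall m, exists x, f x = m) /\
  (forall x y, f (mul x y) = op (f x) (f y)) /\ f one = e.

Definition monoid_isomorphic {B M : Type} (mul : B -> B -> B) (one : B)
  (op : M -> M -> M) (e : M) : Prop :=
  exists f : B -> M, monoid_iso mul one op e f.

(* Left divisibility in an lcm-monoid is a partial order with least element 1
   in which every pair has a join, so any choice of joins is a commutative
   monoid with unit 1; left cancellation makes left multiplication preserve
   left lcms, which is the left brace law.  For a Gaussian monoid the same
   construction applied to the opposite monoid, whose left divisibility is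
   right divisibility, yields the right brace on the same multiplication. *)
From Stdlib Require Import ClassicalEpsilon.

Section JoinSemilattice.
Context {T : Type} (le : T -> T -> Prop) (bot : T).
Hypothesis le_refl : forall x, le x x.
Hypothesis le_trans : forall x y z, le x y -> le y z -> le x z.
Hypothesis le_antisym : forall x y, le x y -> le y x -> x = y.

Lemma is_lcm_forE a b m :
  is_lcm_for le a b m <-> forall c, le m c <-> le a c /\ le b c.
Proof.
  split.
  - intros (Ham & Hbm & Hm) c; split.
    + intros Hmc; split; eauto.
    + intros []; auto.
  - intros Hm; split; [|split].
    + apply Hm, le_refl.
    + apply Hm, le_refl.
    + intros c Hac Hbc; apply Hm; auto.
Qed.

Lemma le_ext x y : (forall c, le x c <-> le y c) -> x = y.
Proof. intros H; apply le_antisym; [apply H | apply (H x)]; apply le_refl. Qed.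

Lemma is_lcm_for_unique a b m m' :
  is_lcm_for le a b m -> is_lcm_for le a b m' -> m = m'.
Proof. intros (Ham & Hbm & Hm) (Ham' & Hbm' & Hm'); apply le_antisym; auto. Qed.

Hypothesis le_bot : forall x, le bot x.
Hypothesis lcm_exists : forall a b, exists m, is_lcm_for le a b m.

Definition join (a b : T) : T :=
  proj1_sig (constructive_indefinite_description _ (lcm_exists a b)).

Lemma join_is_lcm a b : is_lcm_for le a b (join a b).
Proof. exact (proj2_sig (constructive_indefinite_description _ (lcm_exists a b))). Qed.

Lemma le_joinE a b c : le (join a b) c <-> le a c /\ le b c.
Proof. apply is_lcm_forE, join_is_lcm. Qed.

Lemma join_comm_monoid : is_comm_monoid join bot.
Proof.
  repeat split; intros; apply le_ext; intros c; rewrite ?le_joinE.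
  all: pose proof (le_bot c); tauto.
Qed.
End JoinSemilattice.

Section LeftDivisibility.
Context {M : Type} (op : M -> M -> M) (e : M).
Hypothesis op_monoid : is_monoid op e.
Hypothesis unit_trivial : forall x, invertible op e x -> x = e.
Hypothesis op_lcancel : left_cancellative op.

Lemma ldiv_refl x : ldiv op x x.
Proof. exists e; symmetry; apply op_monoid. Qed.

Lemma ldiv_trans x y z : ldiv op x y -> ldiv op y z -> ldiv op x z.
Proof.
  intros [u ->] [v ->]; exists (op u v); symmetry; apply op_monoid.
Qed.

Lemma ldiv_unit x : ldiv op e x.
Proof. exists x; symmetry; apply op_monoid. Qed.

Lemma ldiv_antisym x y : ldiv op x y -> ldiv op y x -> x = y.
Proof.
  destruct op_monoid as (op_assoc & _ & op_e).
  intros [u Hu] [v Hv].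
  assert (Huv : op u v = e).
  { apply (op_lcancel x); rewrite op_assoc, <- Hu, <- Hv; auto. }
  assert (Hvu : op v u = e).
  { apply (op_lcancel y); rewrite op_assoc, <- Hv, <- Hu; auto. }
  assert (Hu_e : u = e) by (apply unit_trivial; exists v; auto).
  rewrite Hu, Hu_e; auto.
Qed.

Lemma ldiv_mul2l a b y : ldiv op (op a b) (op a y) <-> ldiv op b y.
Proof.
  destruct op_monoid as (op_assoc & _ & _).
  split; intros [u Hu]; exists u.
  - apply (op_lcancel a); rewrite op_assoc; auto.
  - rewrite Hu, op_assoc; auto.
Qed.

Lemma is_lcm_ldiv_mull a b c m :
  is_lcm_for (ldiv op) b c m ->
  is_lcm_for (ldiv op) (op a b) (op a c) (op a m).
Proof.
  rewrite !(is_lcm_forE (ldiv op) ldiv_refl ldiv_trans); intros Hm x; split.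
  - intros Hx; split; apply (ldiv_trans _ (op a m)); auto;
      apply ldiv_mul2l, Hm, ldiv_refl.
  - intros [Hbx Hcx].
    assert (Hax : ldiv op a x).
    { apply (ldiv_trans _ (op a b)); auto; exists b; reflexivity. }
    destruct Hax as [y ->].
    apply ldiv_mul2l, Hm; split; apply (ldiv_mul2l a); auto.
Qed.
End LeftDivisibility.

Lemma lcm_monoid_left_Mbrace {M : Type} {op : M -> M -> M} {e : M} :
  lcm_monoid op e -> exists oplus, left_Mbrace oplus e op e.
Proof.
  intros (Hmon & Hunit & Hlc & Hlcm).
  pose proof (ldiv_antisym op e Hmon Hunit Hlc) as Hanti.
  pose (j := join (ldiv op) Hlcm).
  assert (Hj : forall a b, is_lcm_for (ldiv op) a b (j a b)).
  { apply join_is_lcm. }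
  exists j; split; [|split; [exact Hmon|]].
  - apply join_comm_monoid.
    + exact (ldiv_refl op e Hmon).
    + exact (ldiv_trans op e Hmon).
    + exact Hanti.
    + exact (ldiv_unit op e Hmon).
  - intros a b c.
    apply (is_lcm_for_unique (ldiv op) Hanti (op a b) (op a c)).
    + apply (is_lcm_ldiv_mull op e Hmon Hlc), Hj.
    + apply Hj.
Qed.

(* Right divisibility for [op] is, by conversion, left divisibility for the
   opposite multiplication, and right cancellation is left cancellation. *)
Lemma lcm_monoid_opposite {M : Type} {op : M -> M -> M} {e : M} :
  lcm_monoid op e -> right_cancellative op ->
  (forall a b, exists m, is_lcm_for (rdiv op) a b m) ->
  lcm_monoid (fun x y => op y x) e.
Proof.
  intros ((op_assoc & op_1x & op_x1) & Hunit & _ & _) Hrc Hrlcm.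
  split; [|split; [|split]]; auto.
  - split; [|split]; auto.
  - intros x [y [Hxy Hyx]]; apply Hunit; exists y; auto.
Qed.

Lemma right_Mbrace_opposite {B : Type} (plus : B -> B -> B) (zero : B)
    (mul : B -> B -> B) (one : B) :
  left_Mbrace plus zero (fun x y => mul y x) one ->
  right_Mbrace plus zero mul one.
Proof.
  intros (Hplus & (mul_assoc & mul_1x & mul_x1) & Hdistr).
  split; [|split; [split; [|split]|]]; auto.
Qed.

Lemma monoid_isomorphic_refl {M : Type} (op : M -> M -> M) (e : M) :
  monoid_isomorphic op e op e.
Proof. exists (fun x => x); repeat split; eauto. Qed.

Theorem theoremA (M : Type) (op : M -> M -> M) (e : M) :
  lcm_monoid op e ->
  (exists (B : Type) (oplus : B -> B -> B) (zero : B)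
          (mul : B -> B -> B) (one : B),
      left_Mbrace oplus zero mul one /\ monoid_isomorphic mul one op e) /\
  (gaussian_monoid op e ->
   exists (B : Type) (oplus : B -> B -> B) (zero : B)
          (plus : B -> B -> B) (zero' : B)
          (mul : B -> B -> B) (one : B),
      left_Mbrace oplus zero mul one /\ right_Mbrace plus zero' mul one /\
      monoid_isomorphic mul one op e).
Proof.
  intros Hlcm_monoid.
  pose proof (monoid_isomorphic_refl op e) as Hiso.
  destruct (lcm_monoid_left_Mbrace Hlcm_monoid) as [oplus Hleft].
  split; [exists M, oplus, e, op, e; auto |].
  intros (_ & _ & _ & Hrc & _ & _ & Hrlcm & _).
  destruct (lcm_monoid_left_Mbrace (lcm_monoid_opposite Hlcm_monoid Hrc Hrlcm))
    as [plus Hright].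
  exists M, oplus, e, plus, e, op, e.
  auto using right_Mbrace_opposite.
Qed.
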